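(* Let $N \ge 1$ and $M \ge 1$ be integers, and let $\mathcal{N}_0 > 0$, $\xi \ge 1$ and $P_{const} > 0$ be real constants. For a transmit power $P \ge 0$ define \[ \eta_{MRT}^\circ(P) = \frac{N \log\left(1 + \dfrac{M P}{(N-1)P + N\mathcal{N}_0}\right)}{\xi P + P_{const}} \quad\text{and}\quad \eta_{LB}(P) = \frac{N M P}{(\xi P + P_{const})\{(N + M -1) P + N\mathcal{N}_0\}}. \] Then $\eta_{LB}(P) \le \eta_{MRT}^\circ(P)$ for all $P \ge 0$, i.e. $\eta_{LB}$ is a lower bound of $\eta_{MRT}^\circ$. Moreover, the saturation power $P_{LB}$ corresponding to $\eta_{LB}$, i.e. the power $P > 0$ at which $\eta_{LB}(P)$ is maximized, is \[ P_{LB} = \sqrt{\frac{N \mathcal{N}_0 P_{const}}{\xi(N + M -1)}}. \]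
   Context: Here $\log$ denotes the natural logarithm. In the paper's model, $\eta_{MRT}^\circ$ is the large-system (deterministic) energy efficiency of maximal ratio transmission beamforming with equal power allocation in a multi-user MISO downlink with $M$ base-station antennas and $N$ single-antenna users: $P$ is the total transmit power, $\mathcal{N}_0$ the normalized noise power, $\xi$ the power amplifier inefficiency and $P_{const}$ the constant (circuit plus static) power consumption. *)

From Stdlib Require Import Reals.
Open Scope R_scope.

Definition eta_MRT (N M : nat) (N0 xi Pconst P : R) : R :=
  INR N * ln (1 + INR M * P / ((INR N - 1) * P + INR N * N0)) / (xi * P + Pconst).

Definition eta_LB (N M : nat) (N0 xi Pconst P : R) : R :=
  INR N * INR M * P /
  ((xi * P + Pconst) * ((INR N + INR M - 1) * P + INR N * N0)).

Definition P_LB (N M : nat) (N0 xi Pconst : R) : R :=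
  sqrt (INR N * N0 * Pconst / (xi * (INR N + INR M - 1))).

(** The lower bound comes from [ln (1 + x) >= x / (1 + x)] applied to the
    SINR [x = M P / ((N - 1) P + N N0)], for which [x / (1 + x)] is exactly the
    rational factor of [eta_LB].  Up to the constant [N M], [eta_LB] is
    [P / ((a P + b) (c P + d))] with positive [a, b, c, d]; cross-multiplying,
    its values at [P] and at [s] with [a c s^2 = b d] differ by a multiple of
    [-(P - s)^2], so [s = sqrt (b d / (a c))] is the strict maximiser. *)

From Stdlib Require Import Reals Lra Psatz.
Open Scope R_scope.

Lemma ln_le_sub_1 (y : R) : 0 < y -> ln y <= y - 1.
Proof.
  intros Hy.
  pose proof (exp_ineq1_le (ln y)) as H.
  rewrite exp_ln in H by exact Hy.
  lra.
Qed.

Lemma div_succ_le_ln_succ (x : R) : -1 < x -> x / (1 + x) <= ln (1 + x).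
Proof.
  intros Hx.
  assert (Hinv : ln (/ (1 + x)) <= / (1 + x) - 1)
    by (apply ln_le_sub_1, Rinv_0_lt_compat; lra).
  rewrite ln_Rinv in Hinv by lra.
  replace (x / (1 + x)) with (1 - / (1 + x)) by (field; lra).
  lra.
Qed.

Lemma Rdiv_lt_cross (a b c d : R) :
  0 < b -> 0 < d -> a * d < c * b -> a / b < c / d.
Proof.
  intros Hb Hd H.
  apply (Rmult_lt_reg_r (b * d)); [nra |].
  replace (a / b * (b * d)) with (a * d) by (field; lra).
  replace (c / d * (b * d)) with (c * b) by (field; lra).
  exact H.
Qed.

Lemma affine_product_cross_diff (a b c d s P : R) :
  P * ((a * s + b) * (c * s + d)) - s * ((a * P + b) * (c * P + d))
  = (P - s) * (b * d - a * c * (s * s)) - a * c * s * ((P - s) * (P - s)).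
Proof. ring. Qed.

Lemma div_affine_product_lt_peak (a b c d s P : R) :
  0 < a -> 0 < b -> 0 < c -> 0 < d -> 0 < s -> a * c * (s * s) = b * d ->
  0 < P -> P <> s ->
  P / ((a * P + b) * (c * P + d)) < s / ((a * s + b) * (c * s + d)).
Proof.
  intros Ha Hb Hc Hd Hs Hpeak HP Hne.
  apply Rdiv_lt_cross; [apply Rmult_lt_0_compat; nra .. |].
  pose proof (affine_product_cross_diff a b c d s P) as Hdiff.
  rewrite Hpeak, Rminus_diag, Rmult_0_r, Rminus_0_l in Hdiff.
  assert (Hsq : 0 < (P - s) * (P - s)).
  { assert (P - s <> 0) by lra. nra. }
  assert (0 < a * c * s * ((P - s) * (P - s))).
  { apply Rmult_lt_0_compat; [nra | exact Hsq]. }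
  lra.
Qed.

Lemma sqrt_peak_spec (a b c d : R) :
  0 < a -> 0 < b -> 0 < c -> 0 < d ->
  0 < sqrt (d * b / (a * c)) /\
  a * c * (sqrt (d * b / (a * c)) * sqrt (d * b / (a * c))) = b * d.
Proof.
  intros Ha Hb Hc Hd.
  assert (Hq : 0 < d * b / (a * c))
    by (apply Rdiv_lt_0_compat; apply Rmult_lt_0_compat; assumption).
  split; [now apply sqrt_lt_R0 |].
  rewrite sqrt_sqrt by lra.
  field; lra.
Qed.

Lemma one_le_INR (n : nat) : (1 <= n)%nat -> 1 <= INR n.
Proof. intros Hn. exact (le_INR 1 n Hn). Qed.

Lemma eta_LB_le_eta_MRT (N M : nat) (N0 xi Pconst P : R) :
  (1 <= N)%nat -> 0 < N0 -> 0 <= xi -> 0 < Pconst -> 0 <= P ->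
  eta_LB N M N0 xi Pconst P <= eta_MRT N M N0 xi Pconst P.
Proof.
  intros HN HN0 Hxi HPc HP.
  pose proof (one_le_INR N HN) as hN.
  pose proof (pos_INR M) as hM.
  unfold eta_LB, eta_MRT.
  set (D := (INR N - 1) * P + INR N * N0).
  assert (HD : 0 < D) by (unfold D; nra).
  set (x := INR M * P / D).
  assert (Hx : 0 <= x) by (apply Rmult_le_pos; [nra | left; now apply Rinv_0_lt_compat]).
  assert (Hsinr : x / (1 + x) = INR M * P / ((INR N + INR M - 1) * P + INR N * N0))
    by (unfold x, D; field; split; nra).
  replace (INR N * INR M * P / ((xi * P + Pconst) * ((INR N + INR M - 1) * P + INR N * N0)))
    with (INR N * (x / (1 + x)) / (xi * P + Pconst)) by (rewrite Hsinr; field; split; nra).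
  unfold Rdiv at 1 3.
  apply Rmult_le_compat_r; [left; apply Rinv_0_lt_compat; nra |].
  apply Rmult_le_compat_l; [lra |].
  apply div_succ_le_ln_succ; lra.
Qed.

Lemma P_LB_maximises_eta_LB (N M : nat) (N0 xi Pconst : R) :
  (1 <= N)%nat -> (1 <= M)%nat -> 0 < N0 -> 0 < xi -> 0 < Pconst ->
  0 < P_LB N M N0 xi Pconst /\
  forall P : R, 0 < P -> P <> P_LB N M N0 xi Pconst ->
    eta_LB N M N0 xi Pconst P < eta_LB N M N0 xi Pconst (P_LB N M N0 xi Pconst).
Proof.
  intros HN HM HN0 Hxi HPc.
  pose proof (one_le_INR N HN) as hN.
  pose proof (one_le_INR M HM) as hM.
  assert (Hc : 0 < INR N + INR M - 1) by lra.
  assert (Hd : 0 < INR N * N0) by nra.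
  destruct (sqrt_peak_spec xi Pconst (INR N + INR M - 1) (INR N * N0) Hxi HPc Hc Hd)
    as [Hs Hpeak].
  split; [exact Hs |].
  intros P HP Hne.
  unfold eta_LB.
  rewrite <- !(Rmult_div_assoc (INR N * INR M)).
  apply Rmult_lt_compat_l; [nra |].
  now apply div_affine_product_lt_peak.
Qed.

Theorem theorem1 (N M : nat) (N0 xi Pconst : R) :
  (1 <= N)%nat -> (1 <= M)%nat -> 0 < N0 -> 1 <= xi -> 0 < Pconst ->
  (forall P : R, 0 <= P -> eta_LB N M N0 xi Pconst P <= eta_MRT N M N0 xi Pconst P) /\
  (0 < P_LB N M N0 xi Pconst /\
   forall P : R, 0 < P -> P <> P_LB N M N0 xi Pconst ->
     eta_LB N M N0 xi Pconst P < eta_LB N M N0 xi Pconst (P_LB N M N0 xi Pconst)).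
Proof.
  intros HN HM HN0 Hxi HPc.
  split.
  - intros P HP.
    exact (eta_LB_le_eta_MRT N M N0 xi Pconst P HN HN0 ltac:(lra) HPc HP).
  - exact (P_LB_maximises_eta_LB N M N0 xi Pconst HN HM HN0 ltac:(lra) HPc).
Qed.
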